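(* Let $\sigma^0\in\{-1,+1\}^{\mathbb T}$ be any configuration on the triangular lattice and $\sigma^n=\mathrm T^n\sigma^0$ (with $\sigma^\infty=\lim_n\sigma^n$ where it exists). Let $(\zeta_0,\dots,\zeta_k)$ be an m-path on which $\sigma^0$ is constant, equal to $s$. If $\zeta_0$ and $\zeta_k$ are fixated (i.e., $\sigma^n_{\zeta_0}=\sigma^n_{\zeta_k}=s$ for all $n$), then every $\zeta_i$ is fixated: $\sigma^n_{\zeta_i}=s$ for all $n$ and all $i=0,\dots,k$.
   Context: Each site $x$ of the triangular lattice $\mathbb T$ has a set $\mathcal N(x)$ of six neighbors. The cellular automaton $\mathrm T$ acts synchronously: $(\mathrm T\sigma)_x=\sigma_x$ if $x$ has at least two neighbors $y_1,y_2$ with $\sigma_{y_1}=\sigma_{y_2}=\sigma_x$ and $y_1,y_2$ not neighbors of each other; otherwise $(\mathrm T\sigma)_x=-\sigma_x$. A path is a sequence $(\zeta_0,\dots,\zeta_k)$ of distinct sites with $\zeta_{i+1}\in\mathcal N(\zeta_i)$; it is an m-path if $\zeta_{i-1}$ and $\zeta_{i+1}$ are not neighbors for $i=1,\dots,k-1$. *)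

From Stdlib Require Import ZArith List ClassicalEpsilon.
Open Scope Z_scope.

(* The triangular lattice: sites Z x Z, embedded as a*(1,0) + b*(1/2, sqrt3/2);
   the six neighbours of (a,b) are (a+-1,b), (a,b+-1), (a+1,b-1), (a-1,b+1). *)
Definition site := (Z * Z)%type.

Definition nbr (x y : site) : Prop :=
  let da := fst y - fst x in
  let db := snd y - snd x in
  (da = 1 /\ db = 0) \/ (da = -1 /\ db = 0) \/
  (da = 0 /\ db = 1) \/ (da = 0 /\ db = -1) \/
  (da = 1 /\ db = -1) \/ (da = -1 /\ db = 1).

(* Spin configurations in {-1,+1}^T, encoded as bool (true = +1, false = -1). *)
Definition config := site -> bool.

Definition supported (sigma : config) (x : site) : Prop :=
  exists y1 y2, nbr x y1 /\ nbr x y2 /\ y1 <> y2 /\ ~ nbr y1 y2 /\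
    sigma y1 = sigma x /\ sigma y2 = sigma x.

Definition T (sigma : config) : config :=
  fun x => if excluded_middle_informative (supported sigma x)
           then sigma x else negb (sigma x).

Definition evol (n : nat) (sigma0 : config) : config := Nat.iter n T sigma0.

Definition is_path (zeta : nat -> site) (k : nat) : Prop :=
  (forall i j, (i <= k)%nat -> (j <= k)%nat -> zeta i = zeta j -> i = j) /\
  (forall i, (i < k)%nat -> nbr (zeta i) (zeta (S i))).

Definition is_mpath (zeta : nat -> site) (k : nat) : Prop :=
  is_path zeta k /\
  (forall i, (1 <= i)%nat -> (i + 1 <= k)%nat -> ~ nbr (zeta (i - 1)%nat) (zeta (i + 1)%nat)).

From Stdlib Require Import ZArith List Lia ClassicalEpsilon.

(* An interior site of an m-path has its two path neighbours as witnesses of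
   support, so one step of T preserves a spin that is constant along the path;
   only the endpoints can flip, and the hypotheses rule that out at every time. *)

Lemma nbr_sym (x y : site) : nbr x y -> nbr y x.
Proof. unfold nbr; destruct x, y; simpl; lia. Qed.

Lemma T_supported (sigma : config) (x : site) :
  supported sigma x -> T sigma x = sigma x.
Proof.
  intros Hx; unfold T.
  destruct (excluded_middle_informative (supported sigma x)); tauto.
Qed.

Lemma evol_S (n : nat) (sigma0 : config) :
  evol (S n) sigma0 = T (evol n sigma0).
Proof. reflexivity. Qed.

Lemma mpath_interior_supported (sigma : config) (zeta : nat -> site) (k i : nat) :
  is_mpath zeta k -> (1 <= i)%nat -> (i + 1 <= k)%nat ->
  sigma (zeta (i - 1)%nat) = sigma (zeta i) ->
  sigma (zeta (i + 1)%nat) = sigma (zeta i) ->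
  supported sigma (zeta i).
Proof.
  intros [[Hinj Hstep] Hm] Hi1 Hik Hprev Hnext.
  exists (zeta (i - 1)%nat), (zeta (i + 1)%nat).
  repeat split; auto.
  - apply nbr_sym.
    assert (Hi : zeta i = zeta (S (i - 1))) by (f_equal; lia).
    rewrite Hi; apply Hstep; lia.
  - replace (i + 1)%nat with (S i) by lia.
    apply Hstep; lia.
  - intros E; apply Hinj in E; lia.
Qed.

Lemma T_const_on_mpath (sigma : config) (zeta : nat -> site) (k : nat) (s : bool) :
  is_mpath zeta k ->
  (forall i, (i <= k)%nat -> sigma (zeta i) = s) ->
  T sigma (zeta 0%nat) = s -> T sigma (zeta k) = s ->
  forall i, (i <= k)%nat -> T sigma (zeta i) = s.
Proof.
  intros Hpath Hconst H0 Hk i Hi.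
  destruct (Nat.eq_dec i 0) as [->|Hi0]; [exact H0|].
  destruct (Nat.eq_dec i k) as [->|Hik]; [exact Hk|].
  rewrite T_supported; [apply Hconst; lia|].
  apply (mpath_interior_supported sigma zeta k i Hpath); try lia;
    rewrite !Hconst by lia; reflexivity.
Qed.

Theorem lemma1 (sigma0 : config) (zeta : nat -> site) (k : nat) (s : bool) :
  is_mpath zeta k ->
  (forall i, (i <= k)%nat -> sigma0 (zeta i) = s) ->
  (forall n, evol n sigma0 (zeta 0%nat) = s) ->
  (forall n, evol n sigma0 (zeta k) = s) ->
  forall n i, (i <= k)%nat -> evol n sigma0 (zeta i) = s.
Proof.
  intros Hpath Hinit H0 Hk n.
  induction n as [|n IH].
  - exact Hinit.
  - rewrite evol_S.
    apply (T_const_on_mpath _ zeta k s Hpath IH); rewrite <- evol_S; auto.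
Qed.
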